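(* Let $\Delta\ge 4$ be an integer and for positive integers $i,j$ define \[ F(i,j)=(4\Delta-6)\Bigl(\frac{1}{i}+\frac{1}{j}\Bigr)+\Delta^2-6\Delta+3+\frac{6}{\Delta}-(i-j)^2 . \] Then: (a) for every integer $i$ with $3\le i\le \left\lfloor \frac{\Delta+3}{2}\right\rfloor$, the function $j\mapsto F(i,j)$ on the integers $1\le j\le \Delta$ attains its minimum at $j=\Delta$, i.e. $F(i,j)\ge F(i,\Delta)$ for all $1\le j\le \Delta$; (b) for every integer $i$ with $\left\lfloor \frac{\Delta+3}{2}\right\rfloor+1\le i\le \Delta-1$, the function $j\mapsto F(i,j)$ on the integers $1\le j\le \Delta$ attains its minimum at $j=2$, i.e. $F(i,j)\ge F(i,2)$ for all $1\le j\le \Delta$. *)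

From mathcomp Require Import all_boot all_order all_algebra.
Set Implicit Arguments. Unset Strict Implicit. Unset Printing Implicit Defensive.
Import Order.TTheory GRing.Theory Num.Theory.
Local Open Scope ring_scope.

Definition F (D i j : nat) : rat :=
  (4 * D%:R - 6) * (i%:R^-1 + j%:R^-1) + D%:R ^+ 2 - 6 * D%:R + 3
  + 6 / D%:R - (i%:R - j%:R) ^+ 2.

From mathcomp Require Import all_boot all_order all_algebra.
From mathcomp Require Import zify ring lra.
Import Order.TTheory GRing.Theory Num.Theory.
Local Open Scope ring_scope.

(* Since (i - k)^2 - (i - j)^2 = (j - k)(2i - j - k) and 1/j - 1/k = (k - j)/(jk),
   F(i,j) - F(i,k) = (k - j) s with s = (4D - 6 + jk(j + k - 2i)) / (jk), so only
   the sign of s matters.  For k = D and 2i <= D + 3 the numerator is at least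
   4D - 6 + Dj(j - 3) >= 2D - 6 >= 0, because j(j - 3) >= -2 on the integers.  For k = 2, 2 <= j <= D and
   2i >= D + 4 it is at most -2(j - 2)(D - j) - 6 < 0, while for j = 1 the
   cofactor s equals 2(D - i) >= 0. *)

Definition Fslope (D i j k : nat) : rat :=
  (4 * D%:R - 6) / (j%:R * k%:R) + (j%:R + k%:R - 2 * i%:R).

Lemma F_sub (D i j k : nat) : (0 < j)%N -> (0 < k)%N ->
  F D i j - F D i k = (k%:R - j%:R) * Fslope D i j k.
Proof.
move=> j_gt0 k_gt0; rewrite /F /Fslope.
(* The 1/i and 6/D terms cancel; abstracting them spares [field] the side
   conditions i <> 0 and D <> 0. *)
move: (i%:R^-1) (6 / D%:R) => inv_i six_over_D; field.
by rewrite !pnatr_eq0 -!lt0n j_gt0 k_gt0.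
Qed.

Lemma FslopeE (D i j k : nat) : (0 < j)%N -> (0 < k)%N ->
  Fslope D i j k = (4 * D%:R - 6 + j%:R * k%:R * (j%:R + k%:R - 2 * i%:R))
                   / (j%:R * k%:R).
Proof.
move=> j_gt0 k_gt0; rewrite /Fslope; field.
by rewrite !pnatr_eq0 -!lt0n j_gt0 k_gt0.
Qed.

Lemma natr_sub1_mul_sub2_ge0 (R : numDomainType) (n : nat) :
  0 <= (n%:R - 1) * (n%:R - 2) :> R.
Proof.
case: n => [|[|n]]; first by apply: mulr_le0; rewrite subr_le0 ?ler01 ?ler0n.
  by rewrite subrr mul0r.
by apply: mulr_ge0; rewrite subr_ge0 ?(ler_nat R 1 n.+2) ?(ler_nat R 2 n.+2).
Qed.

Lemma Fslope_D_ge0 (D i j : nat) : (3 <= D)%N -> (0 < j)%N ->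
  (2 * i <= D + 3)%N -> 0 <= Fslope D i j D.
Proof.
move=> D_ge3 j_gt0 le_2i; rewrite FslopeE //; last by lia.
have D_ge3r : 3 <= D%:R :> rat by rewrite (ler_nat rat 3).
have j_ge1r : 1 <= j%:R :> rat by rewrite (ler_nat rat 1).
have le_2ir : 2 * i%:R <= D%:R + 3 :> rat by rewrite -natrM -natrD ler_nat.
apply: divr_ge0; last by apply: mulr_ge0; lra.
have j_int := natr_sub1_mul_sub2_ge0 rat j.
have : 0 <= j%:R * D%:R * (D%:R + 3 - 2 * i%:R) :> rat.
  by apply: mulr_ge0; [apply: mulr_ge0 | ]; lra.
nra.
Qed.

Lemma Fslope_2_le0 (D i j : nat) : (2 <= j)%N -> (j <= D)%N ->
  (D + 4 <= 2 * i)%N -> Fslope D i j 2 <= 0.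
Proof.
move=> j_ge2 le_jD le_2i; rewrite FslopeE //; last by lia.
have j_ge2r : 2 <= j%:R :> rat by rewrite (ler_nat rat 2).
have le_jDr : j%:R <= D%:R :> rat by rewrite ler_nat.
have le_2ir : D%:R + 4 <= 2 * i%:R :> rat by rewrite -natrM -natrD ler_nat.
apply: mulr_le0_ge0; last by rewrite invr_ge0; lra.
have : 0 <= (j%:R - 2) * (D%:R - j%:R) :> rat by apply: mulr_ge0; lra.
nra.
Qed.

Lemma Fslope_1_2 (D i : nat) : Fslope D i 1 2 = 2 * (D%:R - i%:R).
Proof. by rewrite /Fslope; field. Qed.

Theorem lemma4p1 (D : nat) (hD : (4 <= D)%N) :
  (forall i : nat, (3 <= i)%N -> (i <= (D + 3)./2)%N ->
     forall j : nat, (1 <= j)%N -> (j <= D)%N -> F D i D <= F D i j) /\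
  (forall i : nat, ((D + 3)./2 + 1 <= i)%N -> (i <= D - 1)%N ->
     forall j : nat, (1 <= j)%N -> (j <= D)%N -> F D i 2 <= F D i j).
Proof.
split=> i le_i le_iD j j_gt0 le_jD; rewrite -subr_ge0.
- rewrite F_sub //; last by lia.
  apply: mulr_ge0; first by rewrite subr_ge0 ler_nat.
  by apply: Fslope_D_ge0; lia.
- rewrite F_sub //.
  have [j_ge2 | j_lt2] := leqP 2 j.
    apply: mulr_le0; first by rewrite subr_le0 (ler_nat rat 2).
    by apply: Fslope_2_le0; lia.
  have -> : j = 1%N by lia.
  rewrite Fslope_1_2; apply: mulr_ge0; last apply: mulr_ge0 => //.
    by rewrite subr_ge0 ler_nat.
  by rewrite subr_ge0 ler_nat; lia.
Qed.
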